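(* Let $P=MN_P$ be a standard parabolic subgroup of $G$, $\pi\in\Pi_{\mathrm{disc}}(M)$, let $Q\subset R$ be standard parabolic subgroups of $G$ and let $w\in{}_QW_P$ with $P_\pi\subset P_w$. Then for every $\gamma^\vee\in\Delta_R^\vee\cap w\mathfrak a_0^P$ we have $\langle w\nu^P_{P_w},\gamma^\vee\rangle<0$.
   Context: $F$ is a number field, $G=\mathrm{GL}_n$ over $F$, $P_0$ the upper triangular Borel, $W\cong\mathfrak S_n$ the Weyl group, $\mathfrak a_0=\mathbb R^n$ with standard inner product, identified with its dual. For standard $S$: $\mathfrak a_S\subset\mathfrak a_0$, $\mathfrak a_0^S$ is the orthogonal complement of $\mathfrak a_S$ (kernel of the projection $\mathfrak a_0\to\mathfrak a_S$), $\Delta_S^\vee$ the set of simple coroots of $S$ (projections to $\mathfrak a_S$ of the coroots of simple roots of $P_0$ not in $M_S$), $\rho_S^{S'}$ for $S\subset S'$ the half-sum of roots of $A_S$ in $M_{S'}\cap N_S$. ${}_QW_P$ is the set of $w\in W$ with $M_P\cap w^{-1}P_0w=M_P\cap P_0$ and $M_Q\cap wP_0w^{-1}=M_Q\cap P_0$; $P_w=(M_P\cap w^{-1}Qw)N_P$. $\Pi_{\mathrm{disc}}(M)$ is the set of discrete automorphic representations of $M(\mathbb A)$ with central character trivial on $A_M^\infty$. Write $M=G_{n_1}\times\dots\times G_{n_k}$, $\pi=\boxtimes_i\pi_i$; by Moeglin–Waldspurger there are integers $r_i,d_i$ with $n_i=r_id_i$ and cuspidal $\sigma_i$ of $\mathrm{GL}_{r_i}$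 with $\pi_i$ the residual representation attached to $\sigma_i^{\otimes d_i}$; $P_\pi\subset P$ is the standard parabolic with $P_\pi\cap M=\prod P_{\pi_i}$, $P_{\pi_i}$ standard in $\mathrm{GL}_{n_i}$ with Levi $\mathrm{GL}_{r_i}^{d_i}$. For $P_\pi\subset S\subset P$ with $S\cap M=\prod S_i$, $\nu^P_S=(-\rho^{\mathrm{GL}_{n_i}}_{S_i}/r_i)_i\in\mathfrak a_S^{P,*}$. *)

(* Combinatorial model of GL_n: a_0 = R^n with R any real field. *)
From mathcomp Require Import all_boot all_order all_fingroup all_algebra.
Set Implicit Arguments. Unset Strict Implicit. Unset Printing Implicit Defensive.
Import Order.TTheory GRing.Theory Num.Theory.
Local Open Scope ring_scope.

(* Simple roots of GL_n: j : 'I_n.-1 stands for alpha_j = e_j - e_{j+1}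
   (0-based coordinates).  A standard parabolic S is encoded by the set
   B_S of simple roots NOT in its Levi M_S ("break points").  S ⊂ S' iff
   B_S' \subset B_S. *)

Lemma ltn_lo n (j : 'I_n.-1) : (j < n)%N.
Proof. case: n j => [|n] [j hj] //=; exact: (leq_trans hj). Qed.
Lemma ltn_hi n (j : 'I_n.-1) : (j.+1 < n)%N.
Proof. case: n j => [|n] [j hj] //=. Qed.

Definition lo n (j : 'I_n.-1) : 'I_n := Ordinal (ltn_lo j).
Definition hi n (j : 'I_n.-1) : 'I_n := Ordinal (ltn_hi j).

Definition sameblk n (B : {set 'I_n.-1}) (i k : 'I_n) : bool :=
  [forall j : 'I_n.-1, (j \in B) ==> ~~ ((minn i k <= j)%N && (j < maxn i k)%N)].

Definition bsize n (B : {set 'I_n.-1}) (i : 'I_n) : nat :=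
  #|[pred k : 'I_n | sameblk B i k]|.
Definition bpos n (B : {set 'I_n.-1}) (i : 'I_n) : nat :=
  #|[pred k : 'I_n | sameblk B i k && (k < i)%N]|.

Section Vec.
Variable R : realFieldType.
Variable n : nat.

Definition vec := 'I_n -> R.

Definition dot (x y : vec) : R := \sum_(i < n) x i * y i.

Definition rootvec (a b : 'I_n) : vec := fun i => (i == a)%:R - (i == b)%:R.

Definition coroot (j : 'I_n.-1) : vec := rootvec (lo j) (hi j).

(* orthogonal projection a_0 -> a_S (average on each block) *)
Definition proj (B : {set 'I_n.-1}) (x : vec) : vec :=
  fun i => (bsize B i)%:R^-1 * \sum_(k < n | sameblk B i k) x k.

(* a_0^S = kernel of the projection a_0 -> a_S *)
Definition in_a0 (B : {set 'I_n.-1}) (x : vec) : Prop := forall i, proj B x i = 0.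

(* Weyl group action: w e_a = e_{w a} *)
Definition wact (w : 'S_n) (x : vec) : vec := fun i => x ((w^-1)%g i).

(* rho_S^{S'}: half-sum of the roots of A_S in M_{S'} ∩ N_S, as element of a_S *)
Definition rho (BS BS' : {set 'I_n.-1}) : vec :=
  proj BS (fun i => 2^-1 * \sum_(a < n) \sum_(b < n |
     [&& (a < b)%N, sameblk BS' a b & ~~ sameblk BS a b]) rootvec a b i).

(* nu^P_S = (-rho^{GL_{n_i}}_{S_i} / r_i)_i, where r i is the r_j of the
   P-block containing coordinate i *)
Definition nu (BP : {set 'I_n.-1}) (r : 'I_n -> nat) (BS : {set 'I_n.-1}) : vec :=
  fun i => - rho BS BP i / (r i)%:R.
End Vec.

Definition inWQP n (BQ BP : {set 'I_n.-1}) (w : 'S_n) : Prop :=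
  (forall a b : 'I_n, (a < b)%N -> sameblk BP a b -> (w a < w b)%N) /\
  (forall a b : 'I_n, (a < b)%N -> sameblk BQ a b -> ((w^-1)%g a < (w^-1)%g b)%N).

(* P_w = (M_P ∩ w^{-1} Q w) N_P: simple root alpha_j lies in its Levi iff
   alpha_j is in M_P and w alpha_j is a root of M_Q *)
Definition Pw n (BP BQ : {set 'I_n.-1}) (w : 'S_n) : {set 'I_n.-1} :=
  [set j : 'I_n.-1 | (j \in BP) || ~~ sameblk BQ (w (lo j)) (w (hi j))].

(* P_pi: each P-block of size n_i = r_i d_i is cut into d_i blocks of size r_i *)
Definition Ppi n (BP : {set 'I_n.-1}) (r : 'I_n -> nat) : {set 'I_n.-1} :=
  [set j : 'I_n.-1 | (j \in BP) || (r (lo j) %| (bpos BP (lo j)).+1)%N].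

(* Write gamma^vee = w z with z in a_0^P; as W acts isometrically,
   <w nu, gamma^vee> = <nu, z>.  The coordinates of gamma^vee are positive
   exactly on the R-block ending at the break j and negative exactly on the
   R-block starting after it, and z sums to zero on every P-block.  Since
   w in _Q W_P and Q ⊂ R, inside a P-block every coordinate where z > 0 comes
   before, and in another P_w-block than, every coordinate where z < 0.  On a
   P-block, -rho^P_{P_w} is the average over P_w-blocks of a half-sum of roots
   that strictly increases across each P_w-break, so nu is smaller where z > 0
   than where z < 0; pairing such a function with a nonzero vector of zero
   block sums gives a negative number. *)

From mathcomp Require Import all_boot all_order all_fingroup all_algebra.
From mathcomp Require Import zify lra.
Import Order.TTheory GRing.Theory Num.Theory.
Set Implicit Arguments.
Unset Strict Implicit.
Unset Printing Implicit Defensive.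

Local Open Scope ring_scope.

Section FinSums.
Variables (R : realFieldType) (I : finType).

Definition mean (P : pred I) (f : I -> R) : R :=
  #|[pred i | P i]|%:R^-1 * \sum_(i | P i) f i.

Lemma sum_pred_const (P : pred I) (c : R) : \sum_(i | P i) c = #|[pred i | P i]|%:R * c.
Proof. by rewrite mulr_natl -sumr_const; apply: eq_bigl => i; rewrite inE. Qed.

Lemma card_pred_gt0 (P : pred I) p : P p -> (0 : R) < #|[pred i | P i]|%:R.
Proof. by move=> Pp; rewrite ltr0n; apply/card_gt0P; exists p. Qed.

Lemma mean_lt (P : pred I) f c p : P p -> (forall i, P i -> f i < c) -> mean P f < c.
Proof.
move=> Pp ltfc; rewrite /mean ltr_pdivrMl ?(card_pred_gt0 Pp) // -sum_pred_const.
by apply: ltr_sum => //; apply/hasP; exists p; rewrite ?mem_index_enum.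
Qed.

Lemma lt_mean (P : pred I) f c p : P p -> (forall i, P i -> c < f i) -> c < mean P f.
Proof.
move=> Pp ltcf; rewrite /mean ltr_pdivlMl ?(card_pred_gt0 Pp) // -sum_pred_const.
by apply: ltr_sum => //; apply/hasP; exists p; rewrite ?mem_index_enum.
Qed.

Lemma mean_lt_mean (P Q : pred I) f p q : P p -> Q q ->
  (forall a b, P a -> Q b -> f b < f a) -> mean Q f < mean P f.
Proof.
move=> Pp Qq ltQP; apply: (lt_mean Pp) => a Pa.
by apply: (mean_lt Qq) => b Qb; apply: ltQP.
Qed.

Lemma sum_cond_delta (P : pred I) (F : I -> R) k :
  \sum_(i | P i) (k == i)%:R * F i = (P k)%:R * F k.
Proof.
rewrite big_mkcond (bigD1 k) //= eqxx mul1r big1 ?addr0 => [|i /negbTE ik].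
  by case: (P k); rewrite ?mul1r ?mul0r.
by rewrite eq_sym ik mul0r if_same.
Qed.

Lemma sum_nat_pred (P : pred I) : \sum_i ((P i)%:R : R) = #|[pred i | P i]|%:R.
Proof.
rewrite -[RHS]mulr1 -sum_pred_const [RHS]big_mkcond.
by apply: eq_bigr => i _; case: (P i).
Qed.
End FinSums.

Section BlockSums.
Variables (R : realFieldType) (I : finType) (e : rel I).
Hypotheses (e_refl : reflexive e) (e_sym : symmetric e) (e_trans : transitive e).

Let block x := [set y | e x y].

Lemma eq_block x y : (block x == block y) = e x y.
Proof.
apply/eqP/idP => [/setP/(_ y) | exy]; first by rewrite !inE e_refl.
by apply/setP => k; rewrite !inE; apply/idP/idP; apply: e_trans; rewrite // e_sym.
Qed.

Lemma sum_mul_blockconst_eq0 (t z : I -> R) :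
  (forall x y, e x y -> t x = t y) -> (forall x, \sum_(y | e x y) z y = 0) ->
  \sum_x t x * z x = 0.
Proof.
move=> t_const z_sum0.
rewrite (partition_big block (mem (block @: setT))) => [|x _]; last exact: imset_f.
apply: big1 => _ /imsetP[x _ ->].
rewrite (eq_bigl (e x)) => [|y]; last by rewrite eq_block e_sym.
by rewrite (eq_bigr (fun y => t x * z y)) => [|y /t_const ->]; rewrite // -mulr_sumr z_sum0 mulr0.
Qed.

Lemma sum_mul_lt0 (f z : I -> R) x0 :
  (forall x, \sum_(y | e x y) z y = 0) ->
  (forall x y, e x y -> 0 < z x -> z y < 0 -> f x < f y) ->
  z x0 < 0 -> \sum_x f x * z x < 0.
Proof.
move=> z_sum0 f_sep z_x0.
pose d x := \big[Num.min/0]_(y | e x y) f y - 1.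
pose t x := \big[Num.max/d x]_(y | e x y && (0 < z y)) f y.
(* t x separates the values of f where z > 0 from those where z < 0 in the
   block of x; being constant on blocks, it can be subtracted from f for free. *)
have t_const x y : e x y -> t x = t y.
  move=> exy; have exE k : e x k = e y k by apply/idP/idP; apply: e_trans; rewrite // e_sym.
  by rewrite /t /d (eq_bigl _ _ exE); apply: eq_bigl => k; rewrite exE.
have le_t x : 0 < z x -> f x <= t x by move=> zx; apply: le_bigmax_cond; rewrite e_refl.
have t_lt y : z y < 0 -> t y < f y.
  move=> zy; apply: bigmax_lt => [|x /andP[eyx zx]]; last by apply: f_sep; rewrite // e_sym.
  by rewrite /d ltrBlDr ltr_pwDr // bigmin_le_cond.
have term_le0 x : (f x - t x) * z x <= 0.
  case: (ltgtP (z x) 0) => [zx | zx | ->]; last by rewrite mulr0.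
    by rewrite nmulr_lle0 // subr_ge0 ltW ?t_lt.
  by rewrite pmulr_lle0 // subr_le0 le_t.
have -> : \sum_x f x * z x = \sum_x (f x - t x) * z x.
  rewrite [RHS](eq_bigr (fun x => f x * z x - t x * z x)) => [|x _]; last exact: mulrBl.
  by rewrite sumrB (sum_mul_blockconst_eq0 t_const z_sum0) subr0.
rewrite (bigD1 x0) //= ltr_wnDr ?sumr_le0 //.
by rewrite nmulr_llt0 // subr_gt0 t_lt.
Qed.
End BlockSums.

Section Blocks.
Variable n : nat.
Implicit Types (B : {set 'I_n.-1}) (a b c d i k : 'I_n).

Lemma sameblk_refl B : reflexive (sameblk B).
Proof. by move=> i; apply/forallP => j; apply/implyP => _; rewrite minnn maxnn; lia. Qed.

Lemma sameblk_sym B : symmetric (sameblk B).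
Proof. by move=> i k; rewrite /sameblk minnC maxnC. Qed.

Lemma sameblk_trans B : transitive (sameblk B).
Proof.
move=> k i l /forallP ik /forallP kl; apply/forallP => j; apply/implyP => jB.
by move: (ik j) (kl j); rewrite jB /=; lia.
Qed.

Lemma sameblk_interval B a b c : (a <= b <= c)%N -> sameblk B a c -> sameblk B a b.
Proof.
move=> abc /forallP ac; apply/forallP => j; apply/implyP => jB.
by move: (ac j); rewrite jB /=; lia.
Qed.

Lemma sameblk_sub B1 B2 i k : B1 \subset B2 -> sameblk B2 i k -> sameblk B1 i k.
Proof.
move=> /subsetP sB /forallP ik; apply/forallP => j; apply/implyP => jB.
by move: (ik j); rewrite (sB _ jB).
Qed.

Lemma sameblk_ltn B a b c d : sameblk B a b -> sameblk B c d ->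
  (a < c)%N -> ~~ sameblk B a c -> (b < d)%N.
Proof.
move=> /forallP ab /forallP cd ac; rewrite negb_forall => /existsP[j].
by rewrite negb_imply negbK => /andP[jB]; move: (ab j) (cd j); rewrite jB /=; lia.
Qed.

Lemma bsize_gt0 (R : numDomainType) B i : (0 : R) < (bsize B i)%:R.
Proof. by rewrite ltr0n; apply/card_gt0P; exists i; rewrite inE sameblk_refl. Qed.

Lemma sameblk_lo_hiN B (j : 'I_n.-1) : j \in B -> ~~ sameblk B (lo j) (hi j).
Proof. by move=> jB; apply/negP => /forallP/(_ j); rewrite jB /=; lia. Qed.

Lemma sameblk_lo_leq B (j : 'I_n.-1) i : j \in B -> sameblk B i (lo j) -> (i <= j)%N.
Proof. by move=> jB /forallP/(_ j); rewrite jB /=; lia. Qed.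

Lemma sameblk_hi_gtn B (j : 'I_n.-1) i : j \in B -> sameblk B i (hi j) -> (j < i)%N.
Proof. by move=> jB /forallP/(_ j); rewrite jB /=; lia. Qed.

Lemma sameblk_ind B (e : rel 'I_n) : reflexive e -> transitive e ->
    (forall j : 'I_n.-1, j \notin B -> e (lo j) (hi j)) ->
  forall a b, (a <= b)%N -> sameblk B a b -> e a b.
Proof.
move=> e_refl e_trans e_step a b; have [m] := ubnP (b - a).
elim: m b => // m IHm b ltbm ab sab.
have [eab | ltab] := eqVneq (nat_of_ord a) b.
  by rewrite (val_inj eab) e_refl.
have ltjn : (b.-1 < n.-1)%N by have := ltn_ord b; lia.
pose j := Ordinal ltjn.
have hi_j : hi j = b by apply: val_inj => /=; lia.
have sa_lo : sameblk B a (lo j) by apply: sameblk_interval sab => /=; lia.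
apply: (e_trans (lo j)); first by apply: IHm sa_lo => /=; lia.
rewrite -hi_j; apply: e_step; apply: contraL sab => jB.
by apply/negP => /forallP/(_ j); rewrite jB /=; lia.
Qed.
End Blocks.

Lemma proj_mean (R : realFieldType) n (B : {set 'I_n.-1}) (x : vec R n) i :
  proj B x i = mean (sameblk B i) x.
Proof. by []. Qed.

Lemma sum_rootvec (R : realFieldType) n (c : rel 'I_n) k :
  \sum_a \sum_(b | c a b) rootvec R a b k =
  #|[pred b | c k b]|%:R - #|[pred a | c a k]|%:R.
Proof.
rewrite (eq_bigr (fun a => (k == a)%:R * #|[pred b | c a b]|%:R - (c a k)%:R)) => [|a _].
  by rewrite sumrB (sum_cond_delta predT) mul1r sum_nat_pred.
rewrite /rootvec sumrB sum_pred_const mulrC; congr (_ - _).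
by rewrite -[RHS]mulr1 -(sum_cond_delta _ (fun=> 1)); apply: eq_bigr => b _; rewrite mulr1.
Qed.

Section Rho.
Variables (R : realFieldType) (n : nat) (BS BS' : {set 'I_n.-1}).
Hypothesis sub_BS' : BS' \subset BS.

Let root_NS (a b : 'I_n) := [&& (a < b)%N, sameblk BS' a b & ~~ sameblk BS a b].
Let halfsum (k : 'I_n) : R :=
  2^-1 * (#|[pred b | root_NS k b]|%:R - #|[pred a | root_NS a k]|%:R).

Lemma rho_mean i : rho R BS BS' i = mean (sameblk BS i) halfsum.
Proof.
rewrite /rho proj_mean /mean; congr (_ * _).
by apply: eq_bigr => k _; rewrite (sum_rootvec _ root_NS).
Qed.

Lemma halfsum_lt (k k' : 'I_n) :
  (k < k')%N -> sameblk BS' k k' -> ~~ sameblk BS k k' -> halfsum k' < halfsum k.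
Proof.
move=> lt_kk' S'kk' Skk'.
have lt_out : (#|[pred b | root_NS k' b]| < #|[pred b | root_NS k b]|)%N.
  apply/proper_card/properP; split; last by exists k'; rewrite !inE /root_NS ?ltnn ?lt_kk' ?S'kk'.
  apply/subsetP => b; rewrite !inE => /and3P[lt_k'b S'k'b Sk'b].
  rewrite /root_NS (ltn_trans lt_kk' lt_k'b) (sameblk_trans S'kk' S'k'b) /=.
  apply: contra Skk' => /sameblk_interval; apply; lia.
have le_in : (#|[pred a | root_NS a k]| <= #|[pred a | root_NS a k']|)%N.
  apply/subset_leq_card/subsetP => a; rewrite !inE => /and3P[lt_ak S'ak Sak].
  rewrite /root_NS (ltn_trans lt_ak lt_kk') (sameblk_trans S'ak S'kk') /=.
  apply: contra Sak => /sameblk_interval; apply; lia.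
rewrite /halfsum ltr_pM2l ?invr_gt0 ?ltr0n //.
rewrite -(ltr_nat R) in lt_out; rewrite -(ler_nat R) in le_in; lra.
Qed.

Lemma rho_lt (x y : 'I_n) : (x < y)%N -> sameblk BS' x y -> ~~ sameblk BS x y ->
  rho R BS BS' y < rho R BS BS' x.
Proof.
move=> lt_xy S'xy Sxy; rewrite !rho_mean.
apply: (mean_lt_mean (sameblk_refl _ x) (sameblk_refl _ y)) => a b Sxa Syb.
apply: halfsum_lt.
- exact: sameblk_ltn Sxa Syb lt_xy Sxy.
- apply: sameblk_trans (sameblk_trans S'xy _); last exact: sameblk_sub Syb.
  by rewrite sameblk_sym; apply: sameblk_sub Sxa.
- apply: contra Sxy => Sab; apply: sameblk_trans Sxa (sameblk_trans Sab _).
  by rewrite sameblk_sym.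
Qed.
End Rho.

Lemma nu_lt (R : realFieldType) n (BP BS : {set 'I_n.-1}) (r : 'I_n -> nat) (x y : 'I_n) :
  BP \subset BS -> r x = r y -> (0 < r y)%N ->
  (x < y)%N -> sameblk BP x y -> ~~ sameblk BS x y -> nu R BP r BS x < nu R BP r BS y.
Proof.
move=> sub_BP rxy ry_gt0 lt_xy Pxy Sxy.
rewrite /nu rxy !mulNr ltrN2 ltr_pM2r ?invr_gt0 ?ltr0n //; exact: rho_lt.
Qed.

Section Coroot.
Variables (R : realFieldType) (n : nat) (B : {set 'I_n.-1}) (j : 'I_n.-1).

Lemma proj_coroot i : proj B (coroot R j) i =
  (bsize B i)%:R^-1 * ((sameblk B i (lo j))%:R - (sameblk B i (hi j))%:R).
Proof.
rewrite proj_mean /mean /coroot /rootvec sumrB; congr (_ * (_ - _));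
by rewrite -[RHS]mulr1 -(sum_cond_delta _ (fun=> 1)); apply: eq_bigr => k _; rewrite eq_sym mulr1.
Qed.

Lemma proj_coroot_gt0 i : 0 < proj B (coroot R j) i -> sameblk B i (lo j).
Proof.
rewrite proj_coroot pmulr_rgt0 ?invr_gt0 ?bsize_gt0 // subr_gt0 ltr_nat.
by case: (sameblk B i (lo j)).
Qed.

Lemma proj_coroot_lt0 i : proj B (coroot R j) i < 0 -> sameblk B i (hi j).
Proof.
rewrite proj_coroot pmulr_rlt0 ?invr_gt0 ?bsize_gt0 // subr_lt0 ltr_nat.
by case: (sameblk B i (hi j)).
Qed.

Lemma proj_coroot_hi_lt0 : j \in B -> proj B (coroot R j) (hi j) < 0.
Proof.
move=> jB; rewrite proj_coroot sameblk_refl sameblk_sym (negbTE (sameblk_lo_hiN jB)).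
by rewrite sub0r mulrN1 oppr_lt0 invr_gt0 bsize_gt0.
Qed.
End Coroot.

Lemma in_a0_block_sum (R : realFieldType) n (B : {set 'I_n.-1}) (x : vec R n) i :
  in_a0 B x -> \sum_(k | sameblk B i k) x k = 0.
Proof.
move=> /(_ i); rewrite proj_mean /mean => /eqP.
by rewrite mulf_eq0 invr_eq0 gt_eqF ?bsize_gt0 //= => /eqP.
Qed.

Lemma dot_wact (R : realFieldType) n (w : 'S_n) (x y : vec R n) :
  dot (wact w x) (wact w y) = dot x y.
Proof.
rewrite /dot (reindex_inj (@perm_inj _ w)).
by apply: eq_bigr => i _; rewrite /wact permK.
Qed.

Section Pw.
Variables (n : nat) (BP BQ : {set 'I_n.-1}) (w : 'S_n).
Implicit Types a b x y : 'I_n.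

Lemma sub_Pw : BP \subset Pw BP BQ w.
Proof. by apply/subsetP => j jP; rewrite inE jP. Qed.

Lemma sameblk_Pw x y : (x <= y)%N -> sameblk (Pw BP BQ w) x y -> sameblk BQ (w x) (w y).
Proof.
apply: (sameblk_ind (e := fun a b => sameblk BQ (w a) (w b))) => [a | a b c | j].
- exact: sameblk_refl.
- exact: sameblk_trans.
- by rewrite inE negb_or negbK => /andP[].
Qed.

Lemma Pw_separates (BR : {set 'I_n.-1}) (j : 'I_n.-1) x y :
    BR \subset BQ -> (forall a b, (a < b)%N -> sameblk BP a b -> (w a < w b)%N) ->
    j \in BR -> sameblk BP x y ->
    sameblk BR (w x) (lo j) -> sameblk BR (w y) (hi j) ->
  (x < y)%N /\ ~~ sameblk (Pw BP BQ w) x y.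
Proof.
move=> sub_RQ w_incr jR Pxy Rx Ry.
have lt_wxy : (w x < w y)%N.
  by have := sameblk_lo_leq jR Rx; have := sameblk_hi_gtn jR Ry; lia.
have lt_xy : (x < y)%N.
  case: (ltngtP x y) => [// | lt_yx | /val_inj exy]; last by rewrite exy ltnn in lt_wxy.
  by have := w_incr _ _ lt_yx; rewrite sameblk_sym Pxy => /(_ isT); lia.
split=> //; apply/negP => /(sameblk_Pw (ltnW lt_xy)) /(sameblk_sub sub_RQ) Rxy.
apply: (negP (sameblk_lo_hiN jR)).
by apply: sameblk_trans (sameblk_trans Rxy Ry); rewrite sameblk_sym.
Qed.
End Pw.

Unset Implicit Arguments.

Theorem mainTheorem9 (R : realFieldType) (n : nat)
    (BP BQ BR : {set 'I_n.-1}) (r : 'I_n -> nat) (w : 'S_n) :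
  (* data of pi ∈ Π_disc(M) (Moeglin–Waldspurger): r_i | n_i, constant on P-blocks *)
  (forall i k : 'I_n, sameblk BP i k -> r i = r k) ->
  (forall i : 'I_n, (0 < r i)%N /\ (r i %| bsize BP i)%N) ->
  (* Q ⊂ R *)
  BR \subset BQ ->
  (* w ∈ _Q W_P *)
  inWQP BQ BP w ->
  (* P_pi ⊂ P_w *)
  Pw BP BQ w \subset Ppi BP r ->
  forall j : 'I_n.-1, j \in BR ->
  (* gamma^vee = proj_{a_R}(alpha_j^vee) ∈ Δ_R^vee ∩ w a_0^P *)
  (exists z : vec R n, in_a0 BP z /\
      forall i, proj BR (coroot R j) i = wact w z i) ->
  dot (wact w (nu R BP r (Pw BP BQ w))) (proj BR (coroot R j)) < 0.
Proof.
move=> r_const r_pos sub_RQ [w_incr _] _ j jR [z [z_a0 gamma_wz]].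
have z_gamma x : z x = proj BR (coroot R j) (w x) by rewrite gamma_wz /wact permK.
set nuw := wact w _.
have -> : dot nuw (proj BR (coroot R j)) = dot nuw (wact w z).
  by apply: eq_bigr => i _; rewrite gamma_wz.
rewrite dot_wact.
apply: (sum_mul_lt0 (@sameblk_refl _ BP) (@sameblk_sym _ BP) (@sameblk_trans _ BP)
                   (x0 := (w^-1)%g (hi j))).
- by move=> x; apply: in_a0_block_sum.
- move=> x y Pxy; rewrite !z_gamma => /proj_coroot_gt0 Rx /proj_coroot_lt0 Ry.
  have [lt_xy Pwxy] := Pw_separates sub_RQ w_incr jR Pxy Rx Ry.
  exact: nu_lt (sub_Pw _ _ _) (r_const _ _ Pxy) (r_pos y).1 lt_xy Pxy Pwxy.
- by rewrite z_gamma permKV proj_coroot_hi_lt0.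
Qed.
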